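(* Suppose the following holds: for every polynomial $f(t)=1+\sum_{i=1}^{d}f_{i-1}t^i$ with positive integer coefficients and only real roots, with recursive decomposition $f(t)=g(t)+t\,h(t)$, $g(t)=1+\sum_{i=1}^{d}g_it^i$, $h(t)=1+\sum_{i=1}^{d-1}h_it^i$, one has $h_i\le g_i$ for all $1\le i\le d-1$. Then every polynomial $1+\sum_{i=1}^{d}f_{i-1}t^i$ with positive integer coefficients and only real roots is the $f$-polynomial of a simplicial complex.
   Context: For positive integers $m,i$, the $i$-th binomial expansion of $m$ is the unique representation $m=\binom{a_i}{i}+\binom{a_{i-1}}{i-1}+\cdots+\binom{a_j}{j}$ with $a_i>\cdots>a_j\ge j\ge1$. Recursive decomposition: for $f(t)=1+\sum_{i=1}^d f_{i-1}t^i$ with positive integer coefficients and, for each $1\le i\le d$, the $i$-th binomial expansion $f_{i-1}=\binom{a_i}{i}+\cdots+\binom{a_j}{j}$, set $g_i=\binom{a_i-1}{i}+\binom{a_{i-1}-1}{i-1}+\cdots+\binom{a_j-1}{j}$ and $h_{i-1}=\binom{a_i-1}{i-1}+\binom{a_{i-1}-1}{i-2}+\cdots+\binom{a_j-1}{j-1}$ (so $h_0=1$ and $f_{i-1}=g_i+h_{i-1}$); then $f(t)=g(t)+t\,h(t)$ with $g(t)=1+\sum_{i=1}^d g_it^i$, $h(t)=1+\sum_{i=1}^{d-1}h_it^i$. The $f$-polynomial of a $(d-1)$-dimensional simplicial complex $\Delta$ is $\sum_{i=0}^{d}f_{i-1}t^i$, where $f_i$ is the number of faces of cardinality $i+1$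 and $f_{-1}=1$. *)

From HB Require Import structures.
From mathcomp Require Import all_boot all_order all_algebra algC.
Set Implicit Arguments. Unset Strict Implicit. Unset Printing Implicit Defensive.
Import Order.TTheory GRing.Theory Num.Theory.

(* Convention: a polynomial f(t) = 1 + sum_{i=1}^d f_{i-1} t^i is encoded by
   d and a : nat -> nat with a k = coefficient of t^k, i.e. a i = f_{i-1};
   only a 0 .. a d are used, and a 0 = 1 is required. *)

Definition fpoly (d : nat) (a : nat -> nat) : {poly algC} :=
  \poly_(k < d.+1) ((a k)%:R)%R.

Definition pos_coeffs (d : nat) (a : nat -> nat) : Prop :=
  a 0 = 1 /\ forall i, 1 <= i <= d -> 0 < a i.

Definition real_rooted (p : {poly algC}) : Prop :=
  forall z : algC, root p z -> z \is Num.real.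

(* s = [:: a_i; a_{i-1}; ...; a_j] is the i-th binomial expansion of m:
   m = C(a_i,i) + ... + C(a_j,j), a_i > ... > a_j >= j >= 1,
   where j = i - size s + 1. *)
Definition binom_exp (i m : nat) (s : seq nat) : Prop :=
  [/\ 0 < size s <= i,
      sorted (fun x y => y < x) s,
      (i - size s).+1 <= last 0 s &
      m = \sum_(k < size s) 'C(nth 0 s k, i - k)].

Definition gpart (i : nat) (s : seq nat) : nat :=
  \sum_(k < size s) 'C((nth 0 s k).-1, i - k).

Definition hpart (i : nat) (s : seq nat) : nat :=
  \sum_(k < size s) 'C((nth 0 s k).-1, (i - k).-1).

Definition rec_decomp (d : nat) (a g h : nat -> nat) : Prop :=
  g 0 = 1 /\ h 0 = 1 /\
  forall i, 1 <= i <= d ->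
    exists s, [/\ binom_exp i (a i) s, g i = gpart i s & h i.-1 = hpart i s].

Definition simplicial_complex (n : nat) (D : {set {set 'I_n}}) : Prop :=
  set0 \in D /\ forall F G : {set 'I_n}, F \in D -> G \subset F -> G \in D.

Definition is_f_polynomial (d : nat) (a : nat -> nat) : Prop :=
  exists n (D : {set {set 'I_n}}), simplicial_complex D /\
    forall k, #|[set F in D | #|F| == k]| = (if k <= d then a k else 0).

From mathcomp Require Import all_boot all_order all_algebra algC.
From mathcomp Require Import zify.
Set Implicit Arguments. Unset Strict Implicit. Unset Printing Implicit Defensive.

(* Realise f by the compressed family whose k-faces are the first f_{k-1}
   k-subsets of the vertices in colexicographic order.  Splitting this family
   according to whether a face contains the least vertex 0, a computation with
   binomial expansions shows that the k-faces avoiding 0 number g_k and those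
   containing 0 number h_{k-1}.  The k-sets T avoiding 0 with {0} u T a face,
   and the k-sets avoiding 0 that are faces, are two initial segments of the
   same colex order, of sizes h_k and g_k; so h_k <= g_k makes the first
   contained in the second.  This is exactly what is needed for the family to be
   closed under deleting a vertex, hence a simplicial complex with f-polynomial
   f.  Real-rootedness is used only through the hypothesis h_k <= g_k. *)

Section ColexRank.

Variable n : nat.
Implicit Types F G T : {set 'I_n}.

(* [colex_rank 0 F] is the number of [#|F|]-subsets of nat that precede [F] in
   the colexicographic order. *)
Definition colex_rank (o : nat) F : nat :=
  \sum_(x in F) 'C(x, #|[set y in F | y <= x]| + o).

Lemma colex_rank_set0 o : colex_rank o set0 = 0.
Proof. by rewrite /colex_rank big_set0. Qed.

Lemma set_max_elem F : F != set0 -> exists2 m, m \in F & {in F, forall y : 'I_n, y <= m}.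
Proof.
case/set0Pn => x0 Fx0.
by case: (arg_maxnP (fun i : 'I_n => val i) Fx0) => m Fm maxm; exists m.
Qed.

Lemma set_max_ind (P : {set 'I_n} -> Prop) :
  P set0 ->
  (forall F m, m \in F -> {in F, forall y : 'I_n, y <= m} -> P (F :\ m) -> P F) ->
  forall F, P F.
Proof.
move=> P0 Pmax F; move: {2}#|F| (leqnn #|F|) => k.
elim: k F => [|k IHk] F; first by rewrite leqn0 cards_eq0 => /eqP ->.
have [-> //|/set_max_elem [m Fm maxm] Fk] := eqVneq F set0.
apply: (Pmax F m Fm maxm); apply: IHk.
by move: Fk; rewrite (cardsD1 m F) Fm.
Qed.

Lemma colex_rank_max o F m : m \in F -> {in F, forall y : 'I_n, y <= m} ->
  colex_rank o F = 'C(m, #|F| + o) + colex_rank o (F :\ m).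
Proof.
move=> Fm maxm; rewrite /colex_rank (bigD1 m) //=; congr (_ + _).
  congr 'C(_, _ + o); apply: eq_card => y; rewrite !inE.
  by case: (boolP (y \in F)) => //= /maxm ->.
apply: eq_big => [x|x /andP[Fx xm]]; first by rewrite !inE andbC.
congr 'C(_, _ + o); apply: eq_card => y; rewrite !inE.
have [-> /=|//] := eqVneq y m; rewrite Fm /=; apply/negbTE.
by rewrite -ltnNge ltn_neqAle xm maxm.
Qed.

Lemma colex_rank_lt_bin o G b : {in G, forall y : 'I_n, o <= y < b} -> o <= b ->
  colex_rank o G < 'C(b, #|G| + o).
Proof.
move: b; elim/set_max_ind: G => [|G m Gm maxm IH] b Gb ob.
  by rewrite colex_rank_set0 bin_gt0 cards0.
have cardG : #|G| = #|G :\ m|.+1 by rewrite (cardsD1 m G) Gm.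
have Gmb : {in G :\ m, forall y : 'I_n, o <= y < m}.
  move=> y; rewrite !inE => /andP[ym Gy]; have /andP[oy _] := Gb y Gy.
  by rewrite oy ltn_neqAle ym maxm.
have /andP[om mb] := Gb m Gm.
rewrite (colex_rank_max o Gm maxm); apply: leq_trans (leq_bin2l _ mb).
by rewrite cardG addSn binS -addSn ltn_add2l IH.
Qed.

Lemma colex_rank_lt_elem F b : colex_rank 0 F < 'C(b, #|F|) -> {in F, forall y : 'I_n, y < b}.
Proof.
move=> Fb y Fy.
have [m Fm maxm] : exists2 m, m \in F & {in F, forall y : 'I_n, y <= m}.
  by apply: set_max_elem; apply/set0Pn; exists y.
apply: leq_ltn_trans (maxm y Fy) _; rewrite ltnNge; apply/negP => bm.
have := leq_bin2l #|F| bm; move: Fb; rewrite (colex_rank_max 0 Fm maxm) addn0; lia.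
Qed.

Lemma colex_rank_offset_mono T T' : #|T'| = #|T| -> {in T, forall y : 'I_n, 0 < y} ->
  colex_rank 1 T' < colex_rank 1 T -> colex_rank 0 T' < colex_rank 0 T.
Proof.
move: T'; elim/set_max_ind: T => [|T m Tm maxm IH] T' cardT' Tpos lt1.
  by move: lt1; rewrite colex_rank_set0.
have [T'0|/set_max_elem [m' T'm' maxm']] := eqVneq T' set0.
  by move: cardT'; rewrite T'0 cards0 (cardsD1 m T) Tm.
have cardTm : #|T| = #|T :\ m|.+1 by rewrite (cardsD1 m T) Tm.
rewrite !(colex_rank_max _ Tm maxm) !(colex_rank_max _ T'm' maxm') cardT' in lt1 *.
have [mm'|m'm|mm'] := ltngtP m m'.
- have Tm1 : {in T, forall y : 'I_n, 1 <= y < m.+1} by move=> y Ty; rewrite Tpos // ltnS maxm.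
  have := colex_rank_lt_bin Tm1 isT; rewrite (colex_rank_max _ Tm maxm).
  by have := leq_bin2l (#|T| + 1) mm'; lia.
- have T'm1 : {in T', forall y : 'I_n, 0 <= y < m'.+1} by move=> y T'y; rewrite ltnS maxm'.
  have := colex_rank_lt_bin T'm1 isT; rewrite (colex_rank_max _ T'm' maxm') cardT'.
  by have := leq_bin2l (#|T| + 0) m'm; lia.
- have {mm'} mm' : m = m' := val_inj mm'; subst m'; rewrite ltn_add2l; apply: IH.
  + by move: cardT'; rewrite (cardsD1 m T') T'm' cardTm => -[].
  + by move=> y; rewrite inE => /andP[_ /Tpos].
  + by move: lt1; rewrite ltn_add2l.
Qed.

Lemma colex_rank_setD1 F x : {in F, forall y : 'I_n, 0 < y} -> x \in F ->
  colex_rank 1 (F :\ x) <= colex_rank 0 F.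
Proof.
move: x; elim/set_max_ind: F => [|F m Fm maxm IH] x Fpos Fx; first by rewrite inE in Fx.
have cardFm : #|F| = #|F :\ m|.+1 by rewrite (cardsD1 m F) Fm.
rewrite (colex_rank_max 0 Fm maxm) addn0.
have [->|xm] := eqVneq x m.
  have Fm1 : {in F :\ m, forall y : 'I_n, 1 <= y < m}.
    by move=> y; rewrite !inE => /andP[ym Fy]; rewrite Fpos // ltn_neqAle ym maxm.
  by have := colex_rank_lt_bin Fm1 (Fpos m Fm); rewrite cardFm addn1; lia.
have Fxm : m \in F :\ x by rewrite !inE eq_sym xm.
have maxm' : {in F :\ x, forall y : 'I_n, y <= m} by move=> y; rewrite inE => /andP[_ /maxm].
have cardFx : #|F| = #|F :\ x|.+1 by rewrite (cardsD1 x F) Fx.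
rewrite (colex_rank_max 1 Fxm maxm') addn1 -cardFx leq_add2l.
have -> : F :\ x :\ m = F :\ m :\ x by rewrite !setDDl setUC.
by apply: IH; [move=> y; rewrite inE => /andP[_ /Fpos] | rewrite !inE xm].
Qed.

End ColexRank.

Lemma notin_ord0_gt0 n (T : {set 'I_n.+1}) : ord0 \notin T -> {in T, forall y : 'I_n.+1, 0 < y}.
Proof.
move=> T0 y Ty; rewrite lt0n; apply: contraNneq T0 => y0.
by have <- : y = ord0 by apply: val_inj.
Qed.

Lemma colex_rank_setU0 n (T : {set 'I_n.+1}) :
  ord0 \notin T -> colex_rank 0 (ord0 |: T) = colex_rank 1 T.
Proof.
move=> T0; rewrite /colex_rank big_setU1 //= bin0n.
have -> : #|[set y in ord0 |: T | y <= @ord0 n]| + 0 == 0 = false.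
  by apply/negbTE; rewrite addn0 -lt0n card_gt0; apply/set0Pn; exists ord0; rewrite !inE eqxx.
rewrite add0n; apply: eq_bigr => x Tx; congr 'C(_, _).
have -> : [set y in ord0 |: T | y <= x] = ord0 |: [set y in T | y <= x].
  by apply/setP => y; rewrite !inE; case: (eqVneq y ord0) => [->|].
by rewrite cardsU1 inE (negbTE T0) addn0 addnC.
Qed.

Lemma colex_rank_setD0 n (F : {set 'I_n.+1}) :
  ord0 \in F -> colex_rank 0 F = colex_rank 1 (F :\ ord0).
Proof. by move=> F0; rewrite -colex_rank_setU0 ?setD11 // setD1K. Qed.

Definition binom_sum (p : nat) (s : seq nat) : nat :=
  \sum_(k < size s) 'C(nth 0 s k, p - k).

(* [binom_exp] without the nonemptiness condition, so that [[::]] expands 0. *)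
Definition macaulay_seq (p : nat) (s : seq nat) : Prop :=
  [/\ sorted (fun x y => y < x) s, size s <= p &
      (s != [::] -> (p - size s).+1 <= last 0 s)].

Lemma binom_sum_nil p : binom_sum p [::] = 0.
Proof. by rewrite /binom_sum big_ord0. Qed.

Lemma binom_sum_cons p x s : binom_sum p.+1 (x :: s) = 'C(x, p.+1) + binom_sum p s.
Proof. by rewrite /binom_sum big_ord_recl subn0. Qed.

Lemma macaulay_seq_nil p : macaulay_seq p [::].
Proof. by []. Qed.

Lemma macaulay_seq_behead p x s : macaulay_seq p.+1 (x :: s) -> macaulay_seq p s.
Proof.
case=> /= sorted_xs size_xs last_xs; split; first exact: path_sorted sorted_xs.
  by rewrite -ltnS.
by case: s {sorted_xs} size_xs last_xs => //= y s size_s /(_ isT); rewrite subSS.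
Qed.

Lemma path_gtn_last x s : path (fun x y => y < x) x s -> {in x :: s, forall y, last x s <= y}.
Proof.
elim: s x => [|z s IHs] x /=; first by move=> _ y; rewrite inE => /eqP ->.
case/andP=> zx path_zs y; rewrite inE => /predU1P[->|s_y]; last exact: IHs.
exact: leq_trans (IHs z path_zs z (mem_head _ _)) (ltnW zx).
Qed.

Lemma macaulay_seq_gt0 p s : macaulay_seq p s -> {in s, forall y, 0 < y}.
Proof.
case: s => // x s [path_xs _ /(_ isT) /= last_ge] y xs_y.
exact: leq_trans (leq_trans _ last_ge) (path_gtn_last path_xs xs_y).
Qed.

Lemma binom_sum_lt_head p x s : macaulay_seq p.+1 (x :: s) -> binom_sum p s < 'C(x, p).
Proof.
elim: s x p => [|y s IHs] x p M_xs.
  by rewrite binom_sum_nil bin_gt0; case: M_xs => _ _ /(_ isT) /=; lia.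
have yx : y < x by case: M_xs => /= /andP[].
have M_ys := macaulay_seq_behead M_xs.
case: p M_xs M_ys => [|p] M_xs M_ys; first by case: M_xs.
rewrite binom_sum_cons; apply: leq_trans (leq_bin2l _ yx).
by rewrite binS ltn_add2l IHs.
Qed.

Lemma macaulay_seq_cons p x s : macaulay_seq p s -> binom_sum p s < 'C(x, p) -> p < x ->
  macaulay_seq p.+1 (x :: s).
Proof.
case: s => [|y s] [sorted_s size_s last_s] sum_lt px; first by split=> //=; rewrite subn1.
split=> //=; apply/andP; split=> //.
case: p size_s sum_lt {last_s px} => [//|p] _; rewrite binom_sum_cons !ltnNge.
by apply: contraNN => xy; apply: leq_trans (leq_bin2l _ xy) (leq_addr _ _).
Qed.

Lemma leq_bin_add n k : n < 'C(n + k.+1, k.+1).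
Proof.
elim: k => [|k IHk]; first by rewrite addn1 bin1.
by rewrite addnS binS; apply: leq_trans IHk (leq_addl _ _).
Qed.

Lemma binom_greedy p m : 0 < m ->
  {x | [/\ p.+1 <= x, 'C(x, p.+1) <= m & m < 'C(x.+1, p.+1)]}.
Proof.
move=> m_gt0; have exP : exists x, m < 'C(x.+1, p.+1).
  by exists (m + p); rewrite -addnS leq_bin_add.
have [x mx minx] := find_ex_minn exP; exists x; split=> //.
- rewrite ltnNge; apply/negP => xp; suff : 'C(x.+1, p.+1) <= 1 by lia.
  by move: xp; rewrite leq_eqVlt => /predU1P[->|xp]; rewrite ?binn ?bin_small.
- case: x mx minx => [|x] _ minx; first by rewrite bin0n.
  by rewrite leqNgt; apply/negP => /minx; rewrite ltnn.
Qed.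

Lemma macaulay_exists p m : {s | macaulay_seq p.+1 s & m = binom_sum p.+1 s}.
Proof.
elim: p m => [|p IHp] m; have [->|m_gt0] := posnP m; try by exists [::]; rewrite ?binom_sum_nil.
  exists [:: m]; last by rewrite binom_sum_cons binom_sum_nil bin1 addn0.
  by apply: macaulay_seq_cons (macaulay_seq_nil 0) _ m_gt0; rewrite binom_sum_nil bin0.
have [x [px xm mx]] := binom_greedy p.+1 m_gt0.
have [s M_s r_sum] := IHp (m - 'C(x, p.+2)).
exists (x :: s); last by rewrite binom_sum_cons -r_sum; lia.
by apply: macaulay_seq_cons; rewrite -?r_sum //; move: mx; rewrite binS; lia.
Qed.

Lemma binom_exp_macaulay i m s : 0 < m -> macaulay_seq i s -> m = binom_sum i s ->
  binom_exp i m s.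
Proof.
move=> m_gt0 [sorted_s size_s last_s] m_sum.
have s_nil : s != [::] by apply: contraTneq m_gt0 => s0; rewrite m_sum s0 binom_sum_nil.
by split; rewrite // ?last_s // lt0n size_eq0 s_nil.
Qed.

Lemma hpart1 m s : binom_exp 1 m s -> hpart 1 s = 1.
Proof.
case=> /andP[size_gt0 size_le1] _ _ _; have size1 : size s = 1 by lia.
by rewrite /hpart size1 big_ord1 bin0.
Qed.

Definition colex_below N (p m : nat) : {set {set 'I_N}} :=
  [set F : {set 'I_N} | #|F| == p & colex_rank 0 F < m].

Lemma card_ord_lt N x : x <= N -> #|[set y : 'I_N | y < x]| = x.
Proof.
elim: x => [|x IHx] xN; first by apply/eqP; rewrite cards_eq0; apply/eqP/setP => y; rewrite !inE.
have -> : [set y : 'I_N | y < x.+1] = Ordinal xN |: [set y : 'I_N | y < x].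
  by apply/setP => y; rewrite !inE ltnS leq_eqVlt -val_eqE.
by rewrite cardsU1 inE ltnn IHx // ltnW.
Qed.

Section CardColexBelow.

Variable N : nat.
Implicit Types F G : {set 'I_N.+1}.

Lemma card_draws_ord0 x p (c : bool) : 0 < x <= N.+1 -> 0 < p ->
  #|[set F : {set 'I_N.+1} |
     [&& F \subset [set y : 'I_N.+1 | y < x], #|F| == p & (ord0 \in F) == c]]|
  = 'C(x.-1, p - c).
Proof.
move=> /andP[x_gt0 xN] p_gt0; set B := [set y : 'I_N.+1 | y < x].
pose draws (b : bool) := [set F : {set 'I_N.+1} | [&& F \subset B, #|F| == p & (ord0 \in F) == b]].
have B0 : ord0 \in B by rewrite inE.
have cardB0 : #|B :\ ord0| = x.-1 by move: (cardsD1 ord0 B); rewrite B0 card_ord_lt //; lia.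
have card_false : #|draws false| = 'C(x.-1, p).
  rewrite -cardB0 -cards_draws; apply: eq_card => F; rewrite !inE eqbF_neg subsetD1.
  by rewrite andbA andbAC.
case: c; last by rewrite subn0.
rewrite -/(draws true).
pose D0 := [set F : {set 'I_N.+1} | ord0 \in F].
pose S := [set F : {set 'I_N.+1} | F \subset B & #|F| == p].
have := cardsID D0 S; rewrite cards_draws card_ord_lt //.
have -> : S :\: D0 = draws false by apply/setP => F; rewrite !inE eqbF_neg andbC -andbA.
have -> : S :&: D0 = draws true.
  by apply/setP => F; rewrite !inE eqb_id andbA.
move: card_false; case: x x_gt0 {xN B0 cardB0 D0 S} B draws => // x _ B draws.
by case: p p_gt0 => // p _; rewrite binS /= subn1 /=; lia.
Qed.

Section ColexBelowCons.

Variables (x p R : nat).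
Hypotheses (x_gt0 : 0 < x) (xN : x <= N) (Rx : R < 'C(x, p)).
Let xo : 'I_N.+1 := inord x.

Let xoE : xo = x :> nat.
Proof. by rewrite inordK. Qed.

Let below := colex_below N.+1 p.+1 ('C(x, p.+1) + R).

Let below_max F : F \in below -> {in F, forall y : 'I_N.+1, y <= xo}.
Proof.
rewrite inE xoE => /andP[/eqP cardF rankF] y Fy; rewrite -ltnS.
by apply: (colex_rank_lt_elem _ Fy); rewrite cardF binS; lia.
Qed.

Let below_lt F : F \in colex_below N.+1 p R -> {in F, forall y : 'I_N.+1, y < xo}.
Proof.
rewrite inE xoE => /andP[/eqP cardF rankF] y Fy.
by apply: (colex_rank_lt_elem _ Fy); rewrite cardF; lia.
Qed.

Lemma card_colex_below_cons_notin (c : bool) :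
  #|[set F in below | (xo \notin F) && ((ord0 \in F) == c)]| = 'C(x.-1, p.+1 - c).
Proof.
rewrite -card_draws_ord0 ?x_gt0 ?(leqW xN) //.
apply: eq_card => F; rewrite !inE.
suff rearrange : [&& #|F| == p.+1, colex_rank 0 F < 'C(x, p.+1) + R & xo \notin F] =
                 (F \subset [set y : 'I_N.+1 | y < x]) && (#|F| == p.+1).
  by move: rearrange; rewrite !andbA => ->.
apply/idP/idP.
  case/and3P=> /eqP cardF rankF xoF; rewrite cardF eqxx andbT.
  have Fbelow : F \in below by rewrite inE cardF eqxx.
  apply/subsetP => y Fy; rewrite inE -xoE ltn_neqAle (below_max Fbelow Fy) andbT.
  by apply: contraNneq xoF => /val_inj <-.
case/andP=> /subsetP Fx /eqP cardF; rewrite cardF eqxx /=.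
have F_lt : {in F, forall y : 'I_N.+1, 0 <= y < x} by move=> y /Fx; rewrite inE.
apply/andP; split.
  by apply: leq_trans (colex_rank_lt_bin F_lt isT) _; rewrite cardF addn0 leq_addr.
by apply/negP => /Fx; rewrite inE xoE ltnn.
Qed.

Lemma card_colex_below_cons_in (c : bool) :
  #|[set F in below | (xo \in F) && ((ord0 \in F) == c)]| =
  #|[set G in colex_below N.+1 p R | (ord0 \in G) == c]|.
Proof.
set Y := [set G in colex_below N.+1 p R | _].
have xo_notin G : G \in Y -> xo \notin G.
  by rewrite inE => /andP[/below_lt G_lt _]; apply/negP => /G_lt; rewrite ltnn.
have inj : {in Y &, injective (fun G => xo |: G)}.
  by move=> G1 G2 /xo_notin G1xo /xo_notin G2xo E; rewrite -(setU1K G1xo) -(setU1K G2xo) E.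
have ord0_xo : (ord0 == xo) = false.
  by apply/negbTE; rewrite -val_eqE /= xoE eq_sym -lt0n.
rewrite -(card_in_imset inj); apply: eq_card => F; rewrite inE.
apply/andP/imsetP => [[Fbelow /andP[Fxo F0]] | [G YG ->{F}]].
  have cardF : #|F| = #|F :\ xo|.+1 by rewrite (cardsD1 xo F) Fxo.
  exists (F :\ xo); last by rewrite setD1K.
  move: (Fbelow); rewrite !inE (colex_rank_max 0 Fxo (below_max Fbelow)) cardF addn0 xoE.
  by rewrite eqSS ord0_xo F0 andbT => /andP[/eqP cardG]; rewrite cardG ltn_add2l eqxx.
have Gxo := xo_notin G YG.
move: YG; rewrite inE => /andP[Gbelow G0].
have G_lt := below_lt Gbelow.
have max_xo : {in xo |: G, forall y : 'I_N.+1, y <= xo}.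
  by move=> y; rewrite in_setU1 => /predU1P[-> // | /G_lt /ltnW].
split; last by rewrite !inE eqxx ord0_xo G0.
move: Gbelow; rewrite !inE.
rewrite (colex_rank_max 0 (setU11 xo G) max_xo) setU1K // cardsU1 Gxo add1n addn0 xoE.
by case/andP=> /eqP-> rankG; rewrite eqxx ltn_add2l.
Qed.
End ColexBelowCons.

Lemma card_colex_below_ord0 p s (c : bool) : macaulay_seq p s -> {in s, forall x, x <= N} ->
  #|[set F in colex_below N.+1 p (binom_sum p s) | (ord0 \in F) == c]| =
  \sum_(k < size s) 'C((nth 0 s k).-1, p - k - c).
Proof.
elim: s p => [|x s IHs] p M_s s_le.
  rewrite big_ord0; apply/eqP; rewrite cards_eq0; apply/eqP/setP => F.
  by rewrite !inE binom_sum_nil ltn0 andbF.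
case: p M_s => [|p] M_s; first by case: M_s.
have x_gt0 := macaulay_seq_gt0 M_s (mem_head x s).
have xN := s_le x (mem_head x s).
have Rx := binom_sum_lt_head M_s.
rewrite big_ord_recl /= subn0 binom_sum_cons.
rewrite -(cardsID [set F : {set 'I_N.+1} | inord x \in F]) addnC; congr (_ + _).
  rewrite -(card_colex_below_cons_notin x_gt0 xN Rx); apply: eq_card => F; rewrite !inE.
  by rewrite andbCA.
rewrite (eq_bigr (fun k : 'I_(size s) => 'C((nth 0 s k).-1, p - k - c))); last first.
  by move=> k _; rewrite /bump leq0n add1n subSS.
rewrite -(IHs p (macaulay_seq_behead M_s)); last by move=> y s_y; apply: s_le; rewrite inE s_y orbT.
rewrite -(card_colex_below_cons_in x_gt0 xN Rx); apply: eq_card => F; rewrite !inE.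
by rewrite -andbA (andbC ((ord0 \in F) == c)).
Qed.

End CardColexBelow.

Lemma card_colex_below_notin0 N p s : macaulay_seq p s -> {in s, forall x, x <= N} ->
  #|[set F in colex_below N.+1 p (binom_sum p s) | ord0 \notin F]| = gpart p s.
Proof.
move=> M_s s_le; rewrite /gpart.
transitivity (\sum_(k < size s) 'C((nth 0 s k).-1, p - k - false)).
  by rewrite -(card_colex_below_ord0 false M_s s_le); apply: eq_card => F; rewrite !inE eqbF_neg.
by apply: eq_bigr => k _; rewrite subn0.
Qed.

Lemma card_colex_below_in0 N p s : macaulay_seq p s -> {in s, forall x, x <= N} ->
  #|[set F in colex_below N.+1 p (binom_sum p s) | ord0 \in F]| = hpart p s.
Proof.
move=> M_s s_le; rewrite /hpart.
transitivity (\sum_(k < size s) 'C((nth 0 s k).-1, p - k - true)).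
  by rewrite -(card_colex_below_ord0 true M_s s_le); apply: eq_card => F; rewrite !inE eqb_id.
by apply: eq_bigr => k _; rewrite subn1.
Qed.

Lemma card_colex_below N p s : macaulay_seq p s -> {in s, forall x, x <= N} ->
  #|colex_below N.+1 p (binom_sum p s)| = binom_sum p s.
Proof.
move=> M_s s_le; rewrite -(cardsID [set F : {set 'I_N.+1} | ord0 \in F]).
have -> : colex_below N.+1 p (binom_sum p s) :&: [set F : {set 'I_N.+1} | ord0 \in F] =
          [set F in colex_below N.+1 p (binom_sum p s) | ord0 \in F].
  by apply/setP => F; rewrite !inE.
have -> : colex_below N.+1 p (binom_sum p s) :\: [set F : {set 'I_N.+1} | ord0 \in F] =
          [set F in colex_below N.+1 p (binom_sum p s) | ord0 \notin F].
  by apply/setP => F; rewrite !inE andbC.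
rewrite card_colex_below_in0 // card_colex_below_notin0 // /hpart /gpart -big_split.
apply: eq_bigr => k _; have k_lt : k < size s := ltn_ord k.
have s_k : 0 < nth 0 s k by apply: (macaulay_seq_gt0 M_s); rewrite mem_nth.
have pk : 0 < p - k by case: M_s => _ size_s _; lia.
by case: (nth 0 s k) s_k => // y _; case: (p - k) pk => // q _; rewrite binS addnC.
Qed.

Lemma sublevel_subset (T : finType) (P : pred T) (r1 r2 : T -> nat) (b1 b2 : nat) :
  {in P &, forall x y, r1 x < r1 y -> r2 x < r2 y} ->
  #|[set x | P x & r1 x < b1]| <= #|[set x | P x & r2 x < b2]| ->
  [set x | P x & r1 x < b1] \subset [set x | P x & r2 x < b2].
Proof.
move=> mono card_le; apply/subsetP => x; rewrite !inE => /andP[Px r1x].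
rewrite Px /= ltnNge; apply/negP => r2x.
suff : [set x | P x & r2 x < b2] \proper [set x | P x & r1 x < b1].
  by move/proper_card; rewrite ltnNge card_le.
rewrite properE; apply/andP; split.
  apply/subsetP => y; rewrite !inE => /andP[Py r2y]; rewrite Py /= ltnNge; apply/negP => r1y.
  by have := mono x y Px Py (leq_trans r1x r1y); lia.
by apply/subsetPn; exists x; rewrite !inE Px //= -leqNgt.
Qed.

Lemma subset_closed_setD1 (T : finType) (D : {set {set T}}) :
  (forall (F : {set T}) x, F \in D -> x \in F -> F :\ x \in D) ->
  forall F G : {set T}, F \in D -> G \subset F -> G \in D.
Proof.
move=> D_D1 F G; move: {2}#|F :\: G| (erefl #|F :\: G|) => k.
elim: k F => [|k IHk] F cardFG FD GF.
  suff -> : G = F by [].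
  by apply/eqP; rewrite eqEsubset GF /= -setD_eq0 -cards_eq0 cardFG.
have [x] : exists x, x \in F :\: G by apply/set0Pn; rewrite -card_gt0 cardFG.
rewrite inE => /andP[xG xF]; apply: (IHk (F :\ x)); last 2 first.
- exact: D_D1.
- apply/subsetP => y Gy; rewrite !inE (subsetP GF _ Gy) andbT.
  by apply: contraNneq xG => <-.
have : #|(F :\: G) :\ x| = k by move: cardFG; rewrite (cardsD1 x) !inE xG xF => -[].
by rewrite setDDl setUC -setDDl.
Qed.

Lemma card_colex_below_shift N k m :
  #|[set U : {set 'I_N.+1} | (ord0 \notin U) && (#|U| == k) & colex_rank 1 U < m]| =
  #|[set F in colex_below N.+1 k.+1 m | ord0 \in F]|.
Proof.
set I := [set U : {set 'I_N.+1} | _ & _].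
have inj : {in I &, injective (fun U => ord0 |: U)}.
  move=> U1 U2; rewrite !inE => /andP[/andP[U1_0 _] _] /andP[/andP[U2_0 _] _] E.
  by rewrite -(setU1K U1_0) -(setU1K U2_0) E.
rewrite -(card_in_imset inj); apply: eq_card => F; rewrite !inE.
apply/imsetP/idP => [[U] | /andP[/andP[cardF rankF] F0]].
  rewrite !inE => /andP[/andP[U0 /eqP cardU] rankU] ->.
  by rewrite cardsU1 U0 cardU add1n eqxx colex_rank_setU0 // rankU setU11.
have F0' : ord0 \notin F :\ ord0 by rewrite setD11.
exists (F :\ ord0); last by rewrite setD1K.
rewrite inE -(colex_rank_setU0 F0') setD1K // rankF andbT F0' /=.
by move: cardF; rewrite (cardsD1 ord0 F) F0.
Qed.

Section CompressedComplex.

Variables (d : nat) (a : nat -> nat) (s : nat -> seq nat).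
Hypothesis a0 : a 0 = 1.
Hypothesis s_macaulay : forall i, 1 <= i <= d -> macaulay_seq i (s i).
Hypothesis a_binom_sum : forall i, 1 <= i <= d -> a i = binom_sum i (s i).
Hypothesis hpart_le_gpart : forall k, 1 <= k < d -> hpart k.+1 (s k.+1) <= gpart k (s k).

Let N := \max_(i < d.+1) \max_(x <- s i) x.

Let s_le_N i : i <= d -> {in s i, forall x, x <= N}.
Proof.
move=> i_le x s_x; apply: leq_trans (@leq_bigmax_seq _ _ xpredT id x s_x isT) _.
exact: (@leq_bigmax _ (fun j : 'I_d.+1 => \max_(y <- s j) y) (Ordinal (i_le : i < d.+1))).
Qed.

Let D := [set F : {set 'I_N.+1} | (#|F| <= d) && (colex_rank 0 F < a #|F|)].

Lemma compressed_layer k : 1 <= k <= d ->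
  [set F in D | #|F| == k] = colex_below N.+1 k (a k).
Proof.
case/andP=> _ kd; apply/setP => F; rewrite !inE andbC.
by have [->|] := eqVneq #|F| k; rewrite ?kd ?andbF.
Qed.

Lemma compressed_link k (T : {set 'I_N.+1}) : 1 <= k < d -> ord0 \notin T -> #|T| = k ->
  colex_rank 1 T < a k.+1 -> colex_rank 0 T < a k.
Proof.
move=> /andP[k_gt0 kd] T0 cardT rankT.
have ik : 1 <= k <= d by rewrite k_gt0 ltnW.
have iSk : 1 <= k.+1 <= d by [].
pose P := [pred U : {set 'I_N.+1} | (ord0 \notin U) && (#|U| == k)].
have mono : {in P &, forall U V,
    colex_rank 1 U < colex_rank 1 V -> colex_rank 0 U < colex_rank 0 V}.
  move=> U V /andP[_ /eqP cardU] /andP[V0 /eqP cardV].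
  by apply: colex_rank_offset_mono; [rewrite cardU cardV | exact: notin_ord0_gt0].
have card_le :
    #|[set U | P U & colex_rank 1 U < a k.+1]| <= #|[set U | P U & colex_rank 0 U < a k]|.
  rewrite card_colex_below_shift a_binom_sum //.
  rewrite (card_colex_below_in0 (s_macaulay iSk) (s_le_N kd)).
  have -> : [set U | P U & colex_rank 0 U < a k] =
            [set F in colex_below N.+1 k (binom_sum k (s k)) | ord0 \notin F].
    by apply/setP => U; rewrite !inE -a_binom_sum // [RHS]andbC andbA.
  rewrite (card_colex_below_notin0 (s_macaulay ik) (s_le_N (ltnW kd))).
  by apply: hpart_le_gpart; rewrite k_gt0.
(* Both sets below are initial segments of the colex order on k-sets avoiding
   [ord0], of sizes h_k and g_k. *)
have := subsetP (sublevel_subset mono card_le) T.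
by rewrite !inE T0 cardT eqxx rankT => /(_ isT).
Qed.

Lemma compressed_setD1 (F : {set 'I_N.+1}) x : F \in D -> x \in F -> F :\ x \in D.
Proof.
rewrite !inE => /andP[Fd rankF] Fx.
have cardF : #|F| = #|F :\ x|.+1 by rewrite (cardsD1 x F) Fx.
rewrite cardF in Fd rankF; rewrite (ltnW Fd) /=.
have [/eqP|k_gt0] := posnP #|F :\ x|.
  by rewrite cards_eq0 => /eqP->; rewrite colex_rank_set0 cards0 a0.
set k := #|F :\ x| in cardF Fd rankF k_gt0 *.
have kd : 1 <= k < d by rewrite k_gt0.
have [F0|F0] := boolP (ord0 \in F); last first.
  apply: (compressed_link kd _ (erefl k)); first by rewrite !inE (negbTE F0) andbF.
  exact: leq_ltn_trans (colex_rank_setD1 (notin_ord0_gt0 F0) Fx) rankF.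
rewrite (colex_rank_setD0 F0) in rankF.
have T0 : ord0 \notin F :\ ord0 by rewrite setD11.
have cardT : #|F :\ ord0| = k by move: cardF; rewrite (cardsD1 ord0 F) F0 => -[].
have rankT := compressed_link kd T0 cardT rankF.
have [-> //|x0] := eqVneq x ord0.
have Tx : x \in F :\ ord0 by rewrite !inE x0.
have -> : F :\ x = ord0 |: (F :\ ord0 :\ x).
  apply/setP => y; rewrite !inE; have [->|y0] := eqVneq y ord0; first by rewrite eq_sym x0.
  by rewrite andbC.
rewrite colex_rank_setU0; last by rewrite !inE eqxx andbF.
exact: leq_ltn_trans (colex_rank_setD1 (notin_ord0_gt0 T0) Tx) rankT.
Qed.

Lemma compressed_simplicial : simplicial_complex D.
Proof.
split; first by rewrite inE cards0 colex_rank_set0 a0.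
exact: subset_closed_setD1 compressed_setD1.
Qed.

Lemma card_compressed_layer k :
  #|[set F in D | #|F| == k]| = if k <= d then a k else 0.
Proof.
have [kd|dk] := leqP k d; last first.
  apply/eqP; rewrite cards_eq0; apply/eqP/setP => F; rewrite !inE.
  by apply/negP => /andP[/andP[Fd _] /eqP Fk]; move: Fd; rewrite Fk leqNgt dk.
have [->|k_gt0] := posnP k.
  rewrite a0 -(cards1 (set0 : {set 'I_N.+1})); apply: eq_card => F; rewrite !inE cards_eq0.
  by have [->|] := eqVneq F set0; rewrite ?cards0 ?colex_rank_set0 ?a0 ?andbF.
have ik : 1 <= k <= d by rewrite k_gt0.
rewrite compressed_layer // a_binom_sum //.
exact: card_colex_below (s_macaulay ik) (s_le_N kd).
Qed.

Lemma compressed_is_f_polynomial : is_f_polynomial d a.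
Proof. by exists N.+1, D; split; [exact: compressed_simplicial | exact: card_compressed_layer]. Qed.

End CompressedComplex.

Theorem proposition3p5 :
  (forall (d : nat) (a g h : nat -> nat),
      pos_coeffs d a -> real_rooted (fpoly d a) -> rec_decomp d a g h ->
      forall i, 1 <= i <= d.-1 -> h i <= g i) ->
  forall (d : nat) (a : nat -> nat),
    pos_coeffs d a -> real_rooted (fpoly d a) -> is_f_polynomial d a.
Proof.
move=> h_le_g d a [a0 a_gt0] a_real.
pose s i := if i is j.+1 then s2val (macaulay_exists j (a i)) else [::].
have s_macaulay i : 1 <= i <= d -> macaulay_seq i (s i).
  by case: i => // j _; exact: (s2valP (macaulay_exists j (a j.+1))).
have a_binom_sum i : 1 <= i <= d -> a i = binom_sum i (s i).
  by case: i => // j _; exact: (s2valP' (macaulay_exists j (a j.+1))).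
have s_exp i : 1 <= i <= d -> binom_exp i (a i) (s i).
  move=> i_range.
  exact: binom_exp_macaulay (a_gt0 i i_range) (s_macaulay i i_range) (a_binom_sum i i_range).
pose g i := if i is 0 then 1 else gpart i (s i).
pose h i := if i is 0 then 1 else hpart i.+1 (s i.+1).
have decomp : rec_decomp d a g h.
  split=> //; split=> // i i_range; exists (s i); split; first exact: s_exp.
    by case: i i_range.
  by case: i i_range => [|[|i]] // i_range; rewrite (hpart1 (s_exp 1 i_range)).
apply: (compressed_is_f_polynomial a0 s_macaulay a_binom_sum) => k /andP[k_gt0 kd].
case: k k_gt0 kd => // k _ kd.
by apply: (h_le_g d a g h (conj a0 a_gt0) a_real decomp k.+1); rewrite /=; lia.
Qed.
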